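(* If $\phi\in\mathcal{I}$, then $\lim_{r\to\infty}\frac{\phi(r)}{r^2}=\infty$.
   Context: The class $\mathcal{I}$: $\phi:[0,\infty)\to(0,\infty)$ is twice continuously differentiable, extended by $\phi(z)=\phi(|z|)$, with $\Delta\phi>0$, and there exist a positive differentiable radial $\tau$ and a constant $C>0$ with $\tau(z)=C$ for $|z|<1$ and $C^{-1}(\Delta\phi(|z|))^{-1/2}\le\tau(z)\le C(\Delta\phi(|z|))^{-1/2}$ for $|z|\ge1$; $\tau(z)\to0$ as $|z|\to\infty$, $\tau'(r)\to0$, and either $\tau(r)r^{c}$ increases for large $r$ for some $c>0$ or $\lim_{r\to\infty}\tau'(r)\log\frac1{\tau(r)}=0$. *)

From Stdlib Require Import Reals.
From Coquelicot Require Import Coquelicot.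
Open Scope R_scope.

(* Laplacian of the radial function z |-> phi(|z|) on C = R^2, written
   in polar form at radius r > 0:  Delta phi (r) = phi''(r) + phi'(r)/r. *)
Definition lap_rad (phi : R -> R) (r : R) : R :=
  Derive_n phi 2 r + Derive phi r / r.

Definition C2_pos (phi : R -> R) : Prop :=
  forall r, 0 < r ->
    ex_derive phi r /\ ex_derive (Derive phi) r /\ continuous (Derive_n phi 2) r.

(* The class I. The radial functions are represented by their profiles
   on [0, oo); tau is the profile of the radial weight tau(z) = tau(|z|). *)
Definition class_I (phi : R -> R) : Prop :=
  C2_pos phi /\
  (forall r, 0 <= r -> 0 < phi r) /\
  (forall r, 0 < r -> 0 < lap_rad phi r) /\
  exists (tau : R -> R) (C : R),
    0 < C /\
    (forall r, 0 <= r -> 0 < tau r) /\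
    (forall r, 0 < r -> ex_derive tau r) /\
    (forall r, 0 <= r < 1 -> tau r = C) /\
    (forall r, 1 <= r ->
        / C * / sqrt (lap_rad phi r) <= tau r /\
        tau r <= C * / sqrt (lap_rad phi r)) /\
    is_lim tau p_infty 0 /\
    is_lim (Derive tau) p_infty 0 /\
    ((exists c, 0 < c /\ exists R0, 0 < R0 /\
        forall r s, R0 <= r -> r <= s ->
          tau r * Rpower r c <= tau s * Rpower s c)
     \/ is_lim (fun r => Derive tau r * ln (/ tau r)) p_infty 0).

(* Since tau tends to 0 while tau >= C^-1 (Delta phi)^(-1/2), the Laplacian
   Delta phi(r) = phi''(r) + phi'(r)/r tends to infinity.  For radial functions
   (r phi'(r))' = r Delta phi(r), so once Delta phi >= 4M, integrating twice
   gives phi(r) >= M r^2 - O(r) for every M. *)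
From Stdlib Require Import Reals Lra Psatz.
From Coquelicot Require Import Coquelicot.
Open Scope R_scope.

Lemma increment_le_of_derive_le (f g df dg : R -> R) (a : R) :
  (forall x, a <= x -> is_derive f x (df x)) ->
  (forall x, a <= x -> is_derive g x (dg x)) ->
  (forall x, a <= x -> dg x <= df x) ->
  forall r, a <= r -> g r - g a <= f r - f a.
Proof.
  intros Hf Hg Hle r Har.
  assert (Hh : forall x, a <= x ->
            is_derive (fun y => f y - g y) x (df x - dg x)).
  { intros x Hx; apply @is_derive_minus; auto. }
  destruct (MVT_gen (fun y => f y - g y) a r (fun x => df x - dg x))
    as [c [Hc Hinc]]; rewrite ?Rmin_left, ?Rmax_right in * by lra.
  - intros x Hx; apply Hh; lra.
  - intros x Hx; apply continuity_pt_filterlim.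
    apply (ex_derive_continuous (K := R_AbsRing) (V := R_NormedModule)
             (fun y => f y - g y)).
    eexists; apply Hh; lra.
  - pose proof (Hle c (proj1 Hc)); nra.
Qed.

Lemma is_lim_p_infty_of_inv_sqrt_le (f tau : R -> R) (C : R) :
  0 < C ->
  (forall r, 1 <= r -> 0 < f r) ->
  (forall r, 1 <= r -> / C * / sqrt (f r) <= tau r) ->
  is_lim tau p_infty 0 ->
  is_lim f p_infty p_infty.
Proof.
  intros HC Hpos Hbnd Htau.
  apply is_lim_spec in Htau; apply is_lim_spec; intros M.
  set (m := Rabs M + 1).
  assert (Hm : 1 <= m) by (pose proof (Rabs_pos M); unfold m; lra).
  assert (Heps : 0 < / (C * m)) by (apply Rinv_0_lt_compat; nra).
  destruct (Htau (mkposreal _ Heps)) as [x Hx]; simpl in Hx.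
  exists (Rmax x 1); intros r Hr.
  assert (Hr1 : 1 <= r) by (pose proof (Rmax_r x 1); lra).
  assert (Hxr : x < r) by (pose proof (Rmax_l x 1); lra).
  pose proof (sqrt_lt_R0 _ (Hpos r Hr1)) as Hs.
  pose proof (sqrt_sqrt _ (Rlt_le _ _ (Hpos r Hr1))) as Hss.
  assert (Htr : / C * / sqrt (f r) < / (C * m)).
  { specialize (Hx r Hxr); rewrite Rminus_0_r in Hx.
    pose proof (Hbnd r Hr1); pose proof (Rle_abs (tau r)); lra. }
  rewrite Rinv_mult in Htr.
  assert (Hinv : / sqrt (f r) < / m).
  { apply (Rmult_lt_reg_l (/ C)); [apply Rinv_0_lt_compat|]; lra. }
  assert (Hmr : m < sqrt (f r)) by (apply Rinv_lt_cancel; lra).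
  rewrite <- Hss; pose proof (Rle_abs M); unfold m in *; nra.
Qed.

Lemma is_derive_mul_Derive (phi : R -> R) (r : R) :
  0 < r -> ex_derive phi r -> ex_derive (Derive phi) r ->
  is_derive (fun x => x * Derive phi x) r (r * lap_rad phi r).
Proof.
  intros Hr Hd1 Hd2.
  auto_derive; [exact Hd2|].
  unfold lap_rad; simpl.
  change (Derive (fun x => Derive phi x) r) with (Derive (Derive phi) r).
  change (Derive (fun x => Derive (fun y => phi y) x) r)
    with (Derive (Derive phi) r).
  field; lra.
Qed.

Lemma quadratic_minorant_of_lap_rad_ge (phi : R -> R) (a M : R) :
  1 <= a ->
  (forall r, a <= r -> ex_derive phi r /\ ex_derive (Derive phi) r) ->
  (forall r, a <= r -> M <= lap_rad phi r) ->
  exists K, forall r, a <= r -> M / 4 * r ^ 2 - K * r - K <= phi r.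
Proof.
  intros Ha Hd HM.
  set (c1 := a * Derive phi a - M / 2 * a ^ 2).
  assert (Hrphi' : forall r, a <= r -> M / 2 * r ^ 2 + c1 <= r * Derive phi r).
  { intros r Hr.
    pose proof (increment_le_of_derive_le (fun x => x * Derive phi x)
      (fun x => M / 2 * x ^ 2) (fun x => x * lap_rad phi x) (fun x => M * x) a)
      as Hinc.
    cut (M / 2 * r ^ 2 - M / 2 * a ^ 2 <= r * Derive phi r - a * Derive phi a);
      [unfold c1; lra|].
    apply Hinc; [| |clear r Hr|exact Hr].
    - intros x Hx; destruct (Hd x Hx).
      apply is_derive_mul_Derive; auto; lra.
    - intros x _; auto_derive; [exact I|field].
    - intros x Hx; specialize (HM x Hx); nra. }
  set (K1 := Rabs c1).
  set (c2 := phi a - (M / 4 * a ^ 2 - K1 * a)).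
  assert (Hphi : forall r, a <= r -> M / 4 * r ^ 2 - K1 * r + c2 <= phi r).
  { intros r Hr.
    pose proof (increment_le_of_derive_le phi (fun x => M / 4 * x ^ 2 - K1 * x)
      (Derive phi) (fun x => M / 2 * x - K1) a) as Hinc.
    cut (M / 4 * r ^ 2 - K1 * r - (M / 4 * a ^ 2 - K1 * a) <= phi r - phi a);
      [unfold c2; lra|].
    apply Hinc; [| |clear r Hr|exact Hr].
    - intros x Hx; apply Derive_correct, Hd, Hx.
    - intros x _; auto_derive; [exact I|field].
    - intros x Hx; specialize (Hrphi' x Hx).
      pose proof (Rle_abs (- c1)) as Hc1; rewrite Rabs_Ropp in Hc1; fold K1 in Hc1.
      pose proof (Rabs_pos c1) as HK1; fold K1 in HK1.
      apply (Rmult_le_reg_l x); [lra|].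
      simpl in Hrphi' |- *; nra. }
  exists (K1 + Rabs c2); intros r Hr.
  specialize (Hphi r Hr).
  pose proof (Rabs_pos c1) as HK1; fold K1 in HK1.
  pose proof (Rle_abs (- c2)) as Hc2; rewrite Rabs_Ropp in Hc2.
  assert (0 <= Rabs c2 * r) by (apply Rmult_le_pos; [apply Rabs_pos|lra]).
  lra.
Qed.

Lemma quadratic_minorants_of_lap_rad_p_infty (phi : R -> R) :
  (forall r, 0 < r -> ex_derive phi r /\ ex_derive (Derive phi) r) ->
  is_lim (lap_rad phi) p_infty p_infty ->
  forall M, exists a K, forall r, a <= r -> M * r ^ 2 - K * r - K <= phi r.
Proof.
  intros Hd Hlap M.
  apply is_lim_spec in Hlap.
  destruct (Hlap (4 * M)) as [x Hx].
  set (a := Rmax x 1 + 1).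
  assert (Ha1 : 1 <= a) by (pose proof (Rmax_r x 1); unfold a; lra).
  assert (Hxa : x < a) by (pose proof (Rmax_l x 1); unfold a; lra).
  destruct (quadratic_minorant_of_lap_rad_ge phi a (4 * M)) as [K HK].
  - exact Ha1.
  - intros r Hr; apply Hd; lra.
  - intros r Hr; apply Rlt_le, Hx; lra.
  - exists a, K; intros r Hr.
    replace (M * r ^ 2) with (4 * M / 4 * r ^ 2) by field; apply HK, Hr.
Qed.

Lemma is_lim_div_sqr_p_infty (f : R -> R) :
  (forall M, exists a K, forall r, a <= r -> M * r ^ 2 - K * r - K <= f r) ->
  is_lim (fun r => f r / r ^ 2) p_infty p_infty.
Proof.
  intros Hf; apply is_lim_spec; intros N.
  destruct (Hf (Rabs N + 1)) as [a [K HK]].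
  exists (Rmax a (2 * Rabs K + 1)); intros r Hr.
  assert (Har : a <= r) by (pose proof (Rmax_l a (2 * Rabs K + 1)); lra).
  assert (HKr : 2 * Rabs K + 1 < r) by (pose proof (Rmax_r a (2 * Rabs K + 1)); lra).
  pose proof (Rabs_pos K); pose proof (Rle_abs K); pose proof (Rle_abs N).
  assert (Hr2 : 0 < r ^ 2) by nra.
  specialize (HK r Har); simpl.
  apply (Rmult_lt_reg_r (r ^ 2)); [exact Hr2|].
  unfold Rdiv; rewrite Rmult_assoc, Rinv_l, Rmult_1_r by lra; nra.
Qed.

Theorem lemma2p6 (phi : R -> R) :
  class_I phi -> is_lim (fun r => phi r / r ^ 2) p_infty p_infty.
Proof.
  intros [HC2 [_ [Hlap [tau [C [HC [_ [_ [_ [Hbnd [Htau _]]]]]]]]]]].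
  apply is_lim_div_sqr_p_infty, quadratic_minorants_of_lap_rad_p_infty.
  - intros r Hr; destruct (HC2 r Hr) as [Hd1 [Hd2 _]]; auto.
  - apply (is_lim_p_infty_of_inv_sqrt_le _ tau C); [exact HC| | |exact Htau].
    + intros r Hr; apply Hlap; lra.
    + intros r Hr; apply Hbnd, Hr.
Qed.
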